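(* Let $\operatorname{P}\in\operatorname{MM}(A,\theta,S)$, let $i\in S_j$, and suppose $0\le|A_{y,S_j}|\le1$ for all $y\in\mathbb{Y}_{S_j}^{\neq}$. Then for every $\tilde\theta_i\in(0,1)$, the proportional $\tilde\theta_i$-covariation scheme minimizes the CD distance $\mathcal{D}_{\operatorname{CD}}(\sigma(\operatorname{P}),\operatorname{P})$ among all $\tilde\theta_i$-covariation schemes $\sigma$.
   Context: Let $\mathbb{Y}$ be a finite set with $q$ elements. A monomial model $\operatorname{MM}(A,\theta,S)$ is given by $A\in\mathcal{M}_{q\times k}(\mathbb{Z}_{\ge0})$ with rows $A_y$, parameters $\theta\in\mathbb{R}^k_{>0}$, and a partition $S=\{S_1,\dots,S_n\}$ of $[k]$ with each block $(\theta_l)_{l\in S_m}$ in the open probability simplex; $\operatorname{P}(y)=\prod_l\theta_l^{A_{y,l}}$, a probability distribution for every such parameter. $|A_{y,S_j}|=\sum_{l\in S_j}A_{y,l}$; $\mathbb{Y}_{S_j}^{\neq}=\{y\in\mathbb{Y}: A_{y,l}\ne0\text{ for some }l\in S_j\}$. A $\tilde\theta_i$-covariation scheme $\sigma$ maps $\theta$ to $\tilde\theta$ with $\tilde\theta_i$ given, $\tilde\theta_l=\theta_l$ for $l\notin S_j$, and $(\tilde\theta_l)_{l\in S_j}$ in the open simplex; $\sigma(\operatorname{P})(y)=\tilde\theta^{A_y}$. The proportional scheme sets $\tilde\theta_k=\frac{1-\tilde\theta_i}{1-\theta_i}\theta_k$ for $k\in S_j\setminus\{i\}$. The CD distance is $\mathcal{D}_{\operatorname{CD}}(\tilde{\operatorname{P}},\operatorname{P})=\log\max_{y}\frac{\tilde{\operatorname{P}}(y)}{\operatorname{P}(y)}-\log\min_y\frac{\tilde{\operatorname{P}}(y)}{\operatorname{P}(y)}$.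 *)

From mathcomp Require Import all_boot all_order all_algebra.
From mathcomp Require Import all_classical all_reals all_analysis.
Set Implicit Arguments. Unset Strict Implicit. Unset Printing Implicit Defensive.
Import Order.TTheory GRing.Theory Num.Theory.
Local Open Scope ring_scope.

Section MM.
Variables (R : realType) (Y : finType) (k n : nat).
Variable A : Y -> 'I_k -> nat.
(* the partition S = {S_1,..,S_n} of [k]: blk l = index m of the block S_m containing l *)
Variable blk : 'I_k -> 'I_n.

Definition in_block (j : 'I_n) (l : 'I_k) : bool := blk l == j.

Definition valid_param (th : 'I_k -> R) : Prop :=
  (forall l, 0 < th l) /\ (forall m : 'I_n, \sum_(l | in_block m l) th l = 1).

Definition mm_prob (th : 'I_k -> R) (y : Y) : R := \prod_(l < k) th l ^+ A y l.

Definition is_monomial_model : Prop :=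
  forall th, valid_param th -> (forall y, 0 < mm_prob th y) /\ \sum_y mm_prob th y = 1.

Definition blk_deg (j : 'I_n) (y : Y) : nat := (\sum_(l | in_block j l) A y l)%N.

Definition Yneq (j : 'I_n) : pred Y := [pred y | [exists l, in_block j l && (A y l != 0%N)]].

Definition is_covariation (j : 'I_n) (i : 'I_k) (t : R) (th th' : 'I_k -> R) : Prop :=
  th' i = t /\
  (forall l, ~~ in_block j l -> th' l = th l) /\
  (forall l, in_block j l -> 0 < th' l) /\
  \sum_(l | in_block j l) th' l = 1.

Definition proportional (j : 'I_n) (i : 'I_k) (t : R) (th : 'I_k -> R) : 'I_k -> R :=
  fun l => if l == i then t
           else if in_block j l then (1 - t) / (1 - th i) * th l
           else th l.

Definition cd_dist (Pt P : Y -> R) : R :=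
  let r y := Pt y / P y in
  let mx := \big[Num.max/0]_y r y in
  let mn := \big[Num.min/mx]_y r y in
  ln mx - ln mn.
End MM.

(* Under the degree hypothesis an outcome y involves at most one parameter l of
   the block S_j, with exponent one, so sigma(P)(y)/P(y) is either 1 or
   theta~_l/theta_l.  For the proportional scheme these ratios are 1, t/theta_i
   and the common value c = (1-t)/(1-theta_i) on S_j \ {i}.  For any other
   scheme the ratios theta~_l/theta_l on S_j \ {i} average to c with weights
   theta_l, so one of them is >= c and one is <= c.  Moreover, as soon as one
   parameter of S_j occurs in some monomial, all of them do: moving mass onto a
   parameter that never occurs would lower every P(y), and strictly some, against
   sum_y P(y) = 1.  So the proportional ratios lie between the extreme ratios
   of any other scheme, and its CD distance is the smallest. *)

From mathcomp Require Import all_boot all_order all_algebra.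
From mathcomp Require Import all_classical all_reals all_analysis.
From mathcomp Require Import lra zify.
Import Order.TTheory GRing.Theory Num.Theory.
Local Open Scope ring_scope.
Set Implicit Arguments. Unset Strict Implicit.

Lemma sumr_if_eq (R : numDomainType) (I : finType) (P : pred I) (a : I) (d : R) :
  \sum_(l | P l) (if l == a then d else 0) = if P a then d else 0.
Proof.
rewrite -big_mkcondr; case: ifP => Pa.
  by rewrite (big_pred1 a) // => l /=; case: eqP => [->|]; rewrite ?Pa ?andbF.
by rewrite big_pred0 // => l; case: eqP => [->|]; rewrite ?Pa ?andbF.
Qed.

Lemma exists_le_of_sum_le (R : realDomainType) (I : finType) (P : pred I)
    (F G : I -> R) :
  (exists l, P l) -> \sum_(l | P l) F l <= \sum_(l | P l) G l ->
  exists2 l, P l & F l <= G l.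
Proof.
move=> [l0 Pl0] sum_le; apply/exists_inP; apply: contraLR sum_le.
move=> /exists_inPn G_lt_F; rewrite -ltNge ltr_sum //.
  by apply/hasP; exists l0; rewrite ?mem_index_enum.
by move=> l /G_lt_F; rewrite -ltNge.
Qed.

Lemma cd_dist_le (R : realType) (Y : finType) (Pt P Qt Q : Y -> R) :
  (forall y, 0 < Pt y / P y) -> (forall y, 0 < Qt y / Q y) ->
  (forall y, exists y', Pt y / P y <= Qt y' / Q y') ->
  (forall y, exists y', Qt y' / Q y' <= Pt y / P y) ->
  cd_dist Pt P <= cd_dist Qt Q.
Proof.
rewrite /cd_dist; set f := fun y => Pt y / P y; set g := fun y => Qt y / Q y.
move=> f_gt0 g_gt0 f_le_g g_le_f /=; rewrite -/f -/g.
have {}f_gt0 y : 0 < f y := f_gt0 y.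
have {}g_gt0 y : 0 < g y := g_gt0 y.
case: (pickP (@predT Y)) => [y0 _ | Y0]; last by rewrite !big_pred0.
have max_gt0 (h : Y -> R) : h y0 > 0 -> 0 < \big[Num.max/0]_y h y.
  by move=> h_gt0; exact: lt_le_trans h_gt0 (le_bigmax _ _ _).
have min_gt0 (h : Y -> R) : (forall y, 0 < h y) ->
    0 < \big[Num.min/(\big[Num.max/0]_y h y)]_y h y.
  move=> h_gt0; apply: lt_bigmin => //; exact: max_gt0.
set mf := \big[Num.max/0]_y f y; set mg := \big[Num.max/0]_y g y.
have max_le : mf <= mg.
  apply: bigmax_le => [|y _]; first exact: ltW (max_gt0 _ (g_gt0 y0)).
  by have [y' /le_trans->] := f_le_g y; rewrite ?le_bigmax.
have min_le : \big[Num.min/mg]_y g y <= \big[Num.min/mf]_y f y.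
  have min_le_f y : \big[Num.min/mg]_y g y <= f y.
    by have [y' gf] := g_le_f y; exact: le_trans (bigmin_le _ y' _) gf.
  apply: le_bigmin => [|y _]; last exact: min_le_f.
  exact: le_trans (min_le_f y0) (le_bigmax _ _ _).
by rewrite lerB // ler_ln // posrE ?min_gt0 ?max_gt0.
Qed.

Lemma lerXn2r_neq0 (R : numDomainType) (x y : R) (a : nat) :
  0 <= x -> (a != 0%N -> x <= y) -> 0 <= x ^+ a <= y ^+ a.
Proof.
move=> x_ge0 le_xy; rewrite exprn_ge0 //=.
case: (eqVneq a 0%N) => [->|/le_xy x_le_y]; first by rewrite !expr0.
by apply: lerXn2r; rewrite // nnegrE (le_trans x_ge0 x_le_y).
Qed.

Section MonomialModel.
Variables (R : realType) (Y : finType) (k n : nat).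
Variables (A : Y -> 'I_k -> nat) (blk : 'I_k -> 'I_n).

Lemma mm_prob_gt0 (th : 'I_k -> R) y : (forall l, 0 < th l) -> 0 < mm_prob A th y.
Proof. by move=> th_gt0; apply: prodr_gt0 => l _; apply: exprn_gt0. Qed.

Lemma mm_prob_le (th th2 : 'I_k -> R) y :
  (forall l, 0 <= th2 l) -> (forall l, A y l != 0%N -> th2 l <= th l) ->
  mm_prob A th2 y <= mm_prob A th y.
Proof.
move=> th2_ge0 le_th; apply: ler_prod => l _.
exact: lerXn2r_neq0 (th2_ge0 l) (le_th l).
Qed.

Lemma mm_prob_lt (th th2 : 'I_k -> R) y l0 :
  (forall l, 0 < th l) -> (forall l, 0 < th2 l) ->
  (forall l, A y l != 0%N -> th2 l <= th l) ->
  A y l0 != 0%N -> th2 l0 < th l0 -> mm_prob A th2 y < mm_prob A th y.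
Proof.
move=> th_gt0 th2_gt0 le_th used_l0 lt_l0.
rewrite /mm_prob (bigD1 l0) //= [X in _ < X](bigD1 l0) //=.
apply: le_lt_trans (_ : _ <= th2 l0 ^+ A y l0 * \prod_(l | l != l0) th l ^+ A y l) _.
  apply: ler_wpM2l; first by rewrite exprn_ge0 ?ltW.
  by apply: ler_prod => l _; exact: lerXn2r_neq0 (ltW (th2_gt0 l)) (le_th l).
by rewrite ltr_pM2r ?ltrXn2r ?ltW // prodr_gt0 // => l _; rewrite exprn_gt0.
Qed.

Definition move_mass (th : 'I_k -> R) (a b : 'I_k) (d : R) : 'I_k -> R :=
  fun l => th l - (if l == a then d else 0) + (if l == b then d else 0).

Lemma valid_param_move_mass (th : 'I_k -> R) a b d :
  valid_param blk th -> blk a = blk b -> 0 <= d < th a ->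
  valid_param blk (move_mass th a b d).
Proof.
move=> [th_gt0 th_sum] same_blk /andP [d_ge0 d_lt]; split=> [l | m].
  rewrite /move_mass; case: eqP => [->|_]; case: eqP => _; have := th_gt0 l; lra.
rewrite /move_mass !big_split /= sumrN !sumr_if_eq th_sum /in_block same_blk.
by rewrite subrK.
Qed.

Lemma mm_block_param_used (th : 'I_k -> R) a b y0 :
  is_monomial_model R A blk -> valid_param blk th ->
  blk a = blk b -> A y0 a != 0%N -> exists y, A y b != 0%N.
Proof.
move=> mm th_valid same_blk used_a.
apply/existsP; apply: contraT => /existsPn /= unused_b.
have [th_gt0 _] := th_valid.
pose d := th a / 2; pose th2 := move_mass th a b d.
have d_bounds : 0 <= d < th a by have := th_gt0 a; rewrite /d; lra.
have th2_valid := valid_param_move_mass th_valid same_blk d_bounds.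
have [th2_gt0 _] := th2_valid.
have th2_le y l : A y l != 0%N -> th2 l <= th l.
  move=> used_l; have /negbTE l_neq_b : l != b.
    by apply: contraNneq (unused_b y) => <-.
  by rewrite /th2 /move_mass l_neq_b; case: eqP; lra.
have th2a_lt : th2 a < th a.
  have /negbTE a_neq_b : a != b by apply: contraNneq (unused_b y0) => <-.
  by rewrite /th2 /move_mass eqxx a_neq_b /d; have := th_gt0 a; lra.
have [_ sum_th] := mm th th_valid; have [_ sum_th2] := mm th2 th2_valid.
suff : \sum_y mm_prob A th2 y < \sum_y mm_prob A th y by rewrite sum_th sum_th2 ltxx.
rewrite (bigD1 y0) //= [X in _ < X](bigD1 y0) //=.
rewrite ltr_leD ?(mm_prob_lt th_gt0 th2_gt0 (@th2_le y0) used_a) //.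
by apply: ler_sum => y _; apply: mm_prob_le => [l|]; [exact: ltW | exact: th2_le].
Qed.

Variable j : 'I_n.

Lemma blk_deg_le1_support y l :
  (blk_deg A blk j y <= 1)%N -> in_block blk j l -> A y l != 0%N ->
  A y l = 1%N /\ forall m, in_block blk j m -> m != l -> A y m = 0%N.
Proof.
move=> + jl used_l; rewrite /blk_deg (bigD1 l) //=.
set rest := (\sum_(m | _) _)%N => deg_le1.
move: used_l; rewrite -lt0n => A_gt0; split=> [|m jm m_neq_l]; first lia.
have /eqP : rest = 0%N by lia.
by rewrite sum_nat_eq0 => /forall_inP/(_ m); rewrite jm m_neq_l => /(_ isT)/eqP.
Qed.

Lemma mm_prob_ratio_used (th th2 : 'I_k -> R) y l :
  (forall m, 0 < th m) -> (forall m, ~~ in_block blk j m -> th2 m = th m) ->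
  (blk_deg A blk j y <= 1)%N -> in_block blk j l -> A y l != 0%N ->
  mm_prob A th2 y / mm_prob A th y = th2 l / th l.
Proof.
move=> th_gt0 th2_out deg_le1 jl used_l.
have [A1 A0] := blk_deg_le1_support deg_le1 jl used_l.
have rest_eq : \prod_(m | m != l) th2 m ^+ A y m = \prod_(m | m != l) th m ^+ A y m.
  apply: eq_bigr => m m_neq_l; case: (boolP (in_block blk j m)) => jm.
    by rewrite A0 ?expr0.
  by rewrite th2_out.
rewrite /mm_prob (bigD1 l) //= [X in _ / X](bigD1 l) //= rest_eq A1 !expr1.
rewrite invfM mulrACA divff ?mulr1 // gt_eqF // prodr_gt0 // => m _.
exact: exprn_gt0.
Qed.

Lemma mm_prob_unused (th th2 : 'I_k -> R) y :
  (forall m, ~~ in_block blk j m -> th2 m = th m) -> y \notin Yneq A blk j ->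
  mm_prob A th2 y = mm_prob A th y.
Proof.
move=> th2_out y_unused; apply: eq_bigr => m _.
case: (boolP (in_block blk j m)) => jm; last by rewrite th2_out.
suff -> : A y m = 0%N by rewrite !expr0.
by apply/eqP; apply: contraNT y_unused => used_m; apply/existsP; exists m; rewrite jm.
Qed.
End MonomialModel.

Section ProportionalScheme.
Variables (R : realType) (Y : finType) (k n : nat).
Variables (A : Y -> 'I_k -> nat) (blk : 'I_k -> 'I_n).
Variables (th : 'I_k -> R) (j : 'I_n) (i : 'I_k) (t : R) (th' : 'I_k -> R).
Hypothesis th_valid : valid_param blk th.
Hypothesis j_i : in_block blk j i.
Hypothesis t_bounds : 0 < t < 1.
Hypothesis th'_cov : is_covariation blk j i t th th'.

Let rest l := in_block blk j l && (l != i).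
Let tp := proportional blk j i t th.

Lemma covariation_gt0 (th2 : 'I_k -> R) :
  is_covariation blk j i t th th2 -> forall l, 0 < th2 l.
Proof.
move=> [_ [th2_out [th2_gt0 _]]] l; case: (boolP (in_block blk j l)) => jl.
  exact: th2_gt0.
by rewrite th2_out //; case: th_valid.
Qed.

Lemma sum_rest_covariation (th2 : 'I_k -> R) :
  is_covariation blk j i t th th2 -> \sum_(l | rest l) th2 l = 1 - t.
Proof.
move=> [th2_i [_ [_ sum_th2]]].
by rewrite -sum_th2 [in RHS](bigD1 i) //= th2_i addrC addrK.
Qed.

Lemma rest_nonempty : exists l, rest l.
Proof.
apply/existsP; apply: contraT => /existsPn /= no_rest.
have := sum_rest_covariation th'_cov.
rewrite big_pred0 => [|l]; last exact/negbTE/no_rest.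
by case/andP: t_bounds => _; lra.
Qed.

Lemma sum_rest_param : \sum_(l | rest l) th l = 1 - th i.
Proof.
by have [_ th_sum] := th_valid; rewrite -(th_sum j) [in RHS](bigD1 i) //= addrC addrK.
Qed.

Lemma param_lt1 : th i < 1.
Proof.
have [th_gt0 _] := th_valid; have [l rest_l] := rest_nonempty.
have : 0 < \sum_(l | rest l) th l.
  rewrite (bigD1 l) //= ltr_pwDl ?th_gt0 // sumr_ge0 // => m _; exact: ltW.
by rewrite sum_rest_param subr_gt0.
Qed.

Lemma proportional_rest l : rest l -> tp l = (1 - t) / (1 - th i) * th l.
Proof. by case/andP=> jl /negbTE l_neq_i; rewrite /tp /proportional l_neq_i jl. Qed.

Lemma proportional_covariation : is_covariation blk j i t th tp.
Proof.
have [th_gt0 _] := th_valid; have [t_gt0 t_lt1] := andP t_bounds.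
have tp_i : tp i = t by rewrite /tp /proportional eqxx.
have c_gt0 : 0 < (1 - t) / (1 - th i) by rewrite divr_gt0 ?subr_gt0 ?param_lt1.
split=> //; split=> [l j_l|].
  rewrite /tp /proportional (negbTE j_l).
  by case: eqP => // l_i; rewrite l_i j_i in j_l.
split=> [l jl|].
  have [->|l_neq_i] := eqVneq l i; first by rewrite tp_i.
  rewrite proportional_rest; first exact: mulr_gt0 c_gt0 (th_gt0 l).
  by rewrite /rest jl.
rewrite (bigD1 i) //= (eq_bigr _ proportional_rest) -mulr_sumr sum_rest_param.
by rewrite divfK ?subr_eq0 ?gt_eqF ?param_lt1 // tp_i addrC subrK.
Qed.

Lemma proportional_ratio_rest l m : rest l -> rest m -> tp l / th l = tp m / th m.
Proof.
have [th_gt0 _] := th_valid; move=> rest_l rest_m.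
by rewrite !proportional_rest // !mulfK // gt_eqF.
Qed.

Lemma sum_rest_proportional : \sum_(l | rest l) tp l = \sum_(l | rest l) th' l.
Proof.
by rewrite (sum_rest_covariation proportional_covariation) (sum_rest_covariation th'_cov).
Qed.

Lemma exists_rest_proportional_le : exists2 l, rest l & tp l <= th' l.
Proof. by apply: exists_le_of_sum_le rest_nonempty _; rewrite sum_rest_proportional. Qed.

Lemma exists_rest_proportional_ge : exists2 l, rest l & th' l <= tp l.
Proof. by apply: exists_le_of_sum_le rest_nonempty _; rewrite sum_rest_proportional. Qed.

Hypothesis mm : is_monomial_model R A blk.
Hypothesis deg_le1 : forall y, y \in Yneq A blk j -> (0 <= blk_deg A blk j y <= 1)%N.

Let ratio th2 y := mm_prob A th2 y / mm_prob A th y.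

Lemma ratio_covariation_gt0 (th2 : 'I_k -> R) y :
  is_covariation blk j i t th th2 -> 0 < ratio th2 y.
Proof.
move=> th2_cov; have [th_gt0 _] := th_valid.
by rewrite divr_gt0 ?mm_prob_gt0 // => l; exact: covariation_gt0 th2_cov l.
Qed.

Lemma ratio_covariation_used (th2 : 'I_k -> R) y l :
  is_covariation blk j i t th th2 -> in_block blk j l -> A y l != 0%N ->
  ratio th2 y = th2 l / th l.
Proof.
rewrite /ratio => -[_ [th2_out _]] jl used_l; have [th_gt0 _] := th_valid.
have /andP [_ deg] : (0 <= blk_deg A blk j y <= 1)%N.
  by apply: deg_le1; apply/existsP; exists l; rewrite jl.
exact: mm_prob_ratio_used th_gt0 th2_out deg jl used_l.
Qed.

Lemma ratio_proportional_cases y :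
  ratio tp y = ratio th' y \/
  exists2 m, rest m & A y m != 0%N /\ ratio tp y = tp m / th m.
Proof.
have tp_cov := proportional_covariation.
have [th'_i [th'_out _]] := th'_cov; have [tp_i [tp_out _]] := tp_cov.
have [|y_unused] := boolP (y \in Yneq A blk j); last first.
  left; rewrite /ratio (mm_prob_unused tp_out y_unused).
  by rewrite (mm_prob_unused th'_out y_unused).
case/existsP=> m /andP [jm used_m]; have [m_i | m_neq_i] := eqVneq m i.
  left; rewrite (ratio_covariation_used tp_cov jm used_m).
  by rewrite (ratio_covariation_used th'_cov jm used_m) m_i tp_i th'_i.
right; exists m; first by rewrite /rest jm.
by split=> //; exact: ratio_covariation_used tp_cov jm used_m.
Qed.

Lemma ratio_covariation_attained l m y :
  rest m -> A y m != 0%N -> rest l -> exists y', ratio th' y' = th' l / th l.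
Proof.
move=> /andP [jm _] used_m /andP [jl _].
have same_blk : blk m = blk l by rewrite (eqP jm) (eqP jl).
have [y' used_l] := mm_block_param_used mm th_valid same_blk used_m.
by exists y'; rewrite (ratio_covariation_used th'_cov jl used_l).
Qed.

Lemma ratio_proportional_le y : exists y', ratio tp y <= ratio th' y'.
Proof.
case: (ratio_proportional_cases y) => [->|[m rest_m [used_m ->]]]; first by exists y.
have [l rest_l tp_le] := exists_rest_proportional_le.
have [y' ratio_y'] := ratio_covariation_attained rest_m used_m rest_l.
exists y'; rewrite ratio_y' (proportional_ratio_rest rest_m rest_l) ler_pM2r // invr_gt0.
by case: th_valid.
Qed.

Lemma ratio_proportional_ge y : exists y', ratio th' y' <= ratio tp y.
Proof.
case: (ratio_proportional_cases y) => [->|[m rest_m [used_m ->]]]; first by exists y.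
have [l rest_l le_tp] := exists_rest_proportional_ge.
have [y' ratio_y'] := ratio_covariation_attained rest_m used_m rest_l.
exists y'; rewrite ratio_y' (proportional_ratio_rest rest_m rest_l) ler_pM2r // invr_gt0.
by case: th_valid.
Qed.
End ProportionalScheme.

Theorem theorem3 (R : realType) (Y : finType) (k n : nat)
  (A : Y -> 'I_k -> nat) (blk : 'I_k -> 'I_n) (th : 'I_k -> R)
  (j : 'I_n) (i : 'I_k) :
  is_monomial_model R A blk ->
  valid_param blk th ->
  in_block blk j i ->
  (forall y, y \in Yneq A blk j -> (0 <= blk_deg A blk j y <= 1)%N) ->
  forall t : R, 0 < t < 1 ->
  forall th' : 'I_k -> R, is_covariation blk j i t th th' ->
    cd_dist (mm_prob A (proportional blk j i t th)) (mm_prob A th)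
    <= cd_dist (mm_prob A th') (mm_prob A th).
Proof.
move=> mm th_valid j_i deg_le1 t t_bounds th' th'_cov.
have tp_cov := proportional_covariation th_valid j_i t_bounds th'_cov.
apply: cd_dist_le => y.
- exact: ratio_covariation_gt0 tp_cov.
- exact: ratio_covariation_gt0 th'_cov.
- exact: ratio_proportional_le.
- exact: ratio_proportional_ge.
Qed.
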